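(* Let $p$ be a prime and $R$ a commutative $\mathbb{Q}$-algebra. Let $c_1,c_2,\dots\in R$, and let $X(t)=\sum_{n\ge0}x_nt^n$ and $C(t)=\sum_{n\ge1}\frac{c_n}{n}t^n$ in $R[[t]]$ satisfy $X(t)=\exp(C(t))$; in particular $x_0=1$. Let $U(t)=\sum_{n\ge0}x_{pn}t^{pn}$ be the $p$-singular part and $V(t)=\sum_{p\nmid n}x_nt^n$ the $p$-regular part of $X$. Define $Y(t)=\sum_{n\ge0}y_nt^n=V(t)/U(t)$. Then: (1) $y_n=0$ whenever $p\mid n$; (2) for every $n$, $y_n$ is a polynomial with rational coefficients in the $c_i$ with $p\nmid i$; (3) for every $n\ge1$, $y_n-x_n$ is a $\mathbb{Z}$-linear combination of products $x_\lambda=x_{\lambda_1}x_{\lambda_2}\cdots x_{\lambda_r}$, where $\lambda=(\lambda_1,\dots,\lambda_r)$ runs over partitions of $n$ having at least one part divisible by $p$.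
   Context: For a formal power series $Z(t)=\sum_{n\ge0}z_nt^n$, its $p$-regular part is $\sum_{p\nmid n}z_nt^n$ (which contains no constant term) and its $p$-singular part is $\sum_{n\ge0}z_{pn}t^{pn}$. *)

(* Formal power series over R are represented by their
   coefficient sequences  nat -> R. *)
From HB Require Import structures.
From mathcomp Require Import all_boot all_order all_algebra.
Set Implicit Arguments. Unset Strict Implicit. Unset Printing Implicit Defensive.
Import Order.TTheory GRing.Theory Num.Theory.
Local Open Scope ring_scope.

Section PowerSeries.
Variable R : comUnitRingType.

Definition oneS : nat -> R := fun n => (n == 0%N)%:R.

Definition mulS (f g : nat -> R) : nat -> R :=
  fun n => \sum_(i < n.+1) f i * g (n - i)%N.

Definition powS (f : nat -> R) (k : nat) : nat -> R := iter k (mulS f) oneS.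

(* exp(C) = \sum_k C^k / k!  for a series C with zero constant term; the
   coefficient of t^n only receives contributions from k <= n. *)
Definition expS (C : nat -> R) : nat -> R :=
  fun n => \sum_(k < n.+1) (k`!%:R)^-1 * powS C k n.

Definition logseries (c : nat -> R) : nat -> R :=
  fun n => if n == 0%N then 0 else c n / n%:R.

Definition sing_part (p : nat) (Z : nat -> R) : nat -> R :=
  fun n => if (p %| n)%N then Z n else 0.

Definition reg_part (p : nat) (Z : nat -> R) : nat -> R :=
  fun n => if (p %| n)%N then 0 else Z n.
End PowerSeries.

(* Polynomial expressions with rational coefficients in variables c_i. *)
Inductive ratpolyexpr : Type :=
| QConst of rat
| QVar of nat
| QAdd of ratpolyexpr & ratpolyexpr
| QMul of ratpolyexpr & ratpolyexpr.

Fixpoint qvars_in (P : nat -> bool) (e : ratpolyexpr) : bool :=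
  match e with
  | QConst _ => true
  | QVar i => P i
  | QAdd a b => qvars_in P a && qvars_in P b
  | QMul a b => qvars_in P a && qvars_in P b
  end.

Fixpoint qeval (R : unitRingType) (c : nat -> R) (e : ratpolyexpr) : R :=
  match e with
  | QConst q => ratr q
  | QVar i => c i
  | QAdd a b => qeval c a + qeval c b
  | QMul a b => qeval c a * qeval c b
  end.

Definition is_partition (n : nat) (s : seq nat) : bool :=
  [&& all (fun k => 0 < k)%N s, sorted geq s & sumn s == n].

From HB Require Import structures.
From mathcomp Require Import all_boot all_order all_algebra zify.
From Stdlib Require Import FunctionalExtensionality.
Import Order.TTheory GRing.Theory Num.Theory.
Set Implicit Arguments. Unset Strict Implicit. Unset Printing Implicit Defensive.
Local Open Scope ring_scope.

(** Split [c = c' + c''] with [c'] supported on the indices prime to [p] and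
  [c''] on the multiples of [p].  Then [X = exp C' * exp C''], and the factor
  [S = exp C''] is p-singular with constant term 1, so multiplying by [S]
  commutes with taking p-singular and p-regular parts; hence [V/U = V'/U'],
  where [V', U'] are the parts of [exp C'], which only involves the [c_i] with
  [p] not dividing [i].  The identity [Y U = V] reads
  [y_n = [p ∤ n] x_n - \sum_(0 < i < n, p | n - i) y_i x_(n-i)],
  which gives (1) directly and (3) by strong induction on [n].  The law
  [exp (A + B) = exp A * exp B] is obtained from uniqueness of the solution of
  [θ F = θ A * F], where [θ = t d/dt] is [eulerS]. *)

Section SeriesRing.
Variable R : comUnitRingType.
Implicit Types (f g h A B C F G : nat -> R).

(* The ring laws of [mulS] are inherited from [{poly R}] by truncation. *)
Lemma mulS_coef_polyM f g (P Q : {poly R}) n :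
  (forall j, (j <= n)%N -> P`_j = f j) -> (forall j, (j <= n)%N -> Q`_j = g j) ->
  mulS f g n = (P * Q)`_n.
Proof.
move=> Pf Qg; rewrite coefM /mulS; apply: eq_bigr => i _.
by rewrite Pf ?Qg ?leq_subr // -ltnS.
Qed.

Definition truncS f n : {poly R} := \poly_(i < n.+1) f i.

Lemma coef_truncS f n j : (j <= n)%N -> (truncS f n)`_j = f j.
Proof. by move=> le_jn; rewrite coef_poly ltnS le_jn. Qed.

Lemma coef_truncSM f g n j : (j <= n)%N -> (truncS f n * truncS g n)`_j = mulS f g j.
Proof.
move=> le_jn; symmetry.
by apply: mulS_coef_polyM => k le_kj; apply: coef_truncS; apply: leq_trans le_jn.
Qed.

Lemma mulSC f g : mulS f g = mulS g f.
Proof.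
apply: functional_extensionality => n.
by rewrite -!(coef_truncSM _ _ (leqnn n)) mulrC.
Qed.

Lemma mulSA f g h : mulS f (mulS g h) = mulS (mulS f g) h.
Proof.
apply: functional_extensionality => n.
rewrite (mulS_coef_polyM (@coef_truncS f n) (@coef_truncSM g h n)).
by rewrite (mulS_coef_polyM (@coef_truncSM f g n) (@coef_truncS h n)) mulrA.
Qed.

Lemma mulSDl f g h : mulS (fun n => f n + g n) h = fun n => mulS f h n + mulS g h n.
Proof.
apply: functional_extensionality => n; rewrite /mulS -big_split /=.
by apply: eq_bigr => i _; rewrite mulrDl.
Qed.

Lemma mulSZr (a : R) f g : mulS f (fun n => a * g n) = fun n => a * mulS f g n.
Proof.
apply: functional_extensionality => n; rewrite /mulS mulr_sumr.
by apply: eq_bigr => i _; rewrite mulrCA.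
Qed.

Lemma mulS0r f : mulS f (fun _ => 0) = fun _ => 0.
Proof. by apply: functional_extensionality => n; rewrite /mulS big1 // => i _; rewrite mulr0. Qed.

Lemma mulS_coef0 f g : mulS f g 0 = f 0%N * g 0%N.
Proof. by rewrite /mulS big_ord1. Qed.

Lemma mulS_recr f g n :
  g 0%N = 1 -> mulS f g n = f n + \sum_(i < n) f i * g (n - i)%N.
Proof. by move=> g0; rewrite /mulS big_ord_recr /= subnn g0 mulr1 addrC. Qed.

Lemma mulS_injr g : g 0%N = 1 -> injective (fun f => mulS f g).
Proof.
move=> g0 f h /= eq_fh; apply: functional_extensionality; elim/ltn_ind => n IH.
have := congr1 (fun F => F n) eq_fh; rewrite !mulS_recr //.
by under eq_bigr => i _ do rewrite IH //; apply: addIr.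
Qed.

Lemma powS_eq0_lt C k m : C 0%N = 0 -> (m < k)%N -> powS C k m = 0.
Proof.
move=> C0; elim: k m => [|k IH] m //= lt_mk.
rewrite /mulS big1 // => -[[|i] lt_i] /=; first by rewrite C0 mul0r.
by rewrite IH ?mulr0 //; lia.
Qed.

Definition eulerS f : nat -> R := fun n => n%:R * f n.

Lemma eulerSD f g : eulerS (fun n => f n + g n) = fun n => eulerS f n + eulerS g n.
Proof. by apply: functional_extensionality => n; rewrite /eulerS mulrDr. Qed.

Lemma eulerS_mulS f g :
  eulerS (mulS f g) = fun n => mulS (eulerS f) g n + mulS f (eulerS g) n.
Proof.
apply: functional_extensionality => n; rewrite /eulerS /mulS mulr_sumr -big_split /=.
apply: eq_bigr => i _; have le_in : (i <= n)%N by rewrite -ltnS.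
by rewrite -{1}(subnKC le_in) natrD mulrDl mulrA mulrCA.
Qed.

Lemma eulerS_oneS : eulerS (oneS R) = fun _ => 0.
Proof. by apply: functional_extensionality => -[|n]; rewrite /eulerS /oneS ?mul0r ?mulr0. Qed.

Lemma powSS C k : powS C k.+1 = mulS C (powS C k).
Proof. by []. Qed.

Lemma eulerS_powS C k :
  eulerS (powS C k.+1) = fun n => k.+1%:R * mulS (eulerS C) (powS C k) n.
Proof.
elim: k => [|k IH]; rewrite powSS eulerS_mulS.
  by rewrite eulerS_oneS mulS0r; apply: functional_extensionality => n; rewrite addr0 mul1r.
rewrite IH mulSZr mulSA (mulSC C) -mulSA.
apply: functional_extensionality => n.
by rewrite -[k.+2]addn1 natrD mulrDl mul1r addrC.
Qed.

Lemma expS_coef0 C : expS C 0 = 1.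
Proof. by rewrite /expS big_ord1 /= invr1 mul1r. Qed.

Lemma expS_coef_wide C N n : C 0%N = 0 -> (n < N)%N ->
  expS C n = \sum_(k < N) (k`!%:R)^-1 * powS C k n.
Proof.
move=> C0 lt_nN; rewrite /expS -(subnKC lt_nN) big_split_ord /=.
by rewrite [X in _ + X]big1 ?addr0 // => k _; rewrite -powSS powS_eq0_lt ?mulr0 // ltnS leq_addr.
Qed.

Section Exponential.
Hypothesis natr_unit : forall n : nat, (n.+1)%:R \is a @GRing.unit R.

Lemma invf_factS_natr i : ((i.+1)`!%:R)^-1 * (i.+1)%:R = (i`!%:R)^-1 :> R.
Proof.
have fact_unit : i`!%:R \is a @GRing.unit R by rewrite -(prednK (fact_gt0 i)).
by rewrite factS natrM invrM // -mulrA mulVr ?mulr1.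
Qed.

Lemma eulerS_expS C : C 0%N = 0 -> eulerS (expS C) = mulS (eulerS C) (expS C).
Proof.
move=> C0; apply: functional_extensionality => n.
have -> : mulS (eulerS C) (expS C) n =
    \sum_(k < n.+1) (k`!%:R)^-1 * mulS (eulerS C) (powS C k) n.
  rewrite /mulS; under eq_bigr => i _ do
    rewrite (@expS_coef_wide _ n.+1) ?ltnS ?leq_subr // mulr_sumr.
  rewrite exchange_big /=; apply: eq_bigr => k _; rewrite mulr_sumr.
  by apply: eq_bigr => i _; rewrite mulrCA.
rewrite {1}/eulerS (@expS_coef_wide _ n.+2) // mulr_sumr big_ord_recl.
rewrite mulrCA -[_ * powS C _ n]/(eulerS (oneS R) n) eulerS_oneS mulr0 add0r.
apply: eq_bigr => k _; rewrite lift0 mulrCA.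
by rewrite -[_ * powS C _ n]/(eulerS (powS C k.+1) n) eulerS_powS mulrA invf_factS_natr.
Qed.

Lemma eulerS_sol_uniq A F G : A 0%N = 0 -> F 0%N = G 0%N ->
  eulerS F = mulS A F -> eulerS G = mulS A G -> F = G.
Proof.
move=> A0 FG0 solF solG; apply: functional_extensionality; elim/ltn_ind => -[|n] IH //.
apply: (mulrI (natr_unit n)).
have := congr1 (fun H => H n.+1) solF; have := congr1 (fun H => H n.+1) solG.
rewrite /eulerS => -> ->.
rewrite /mulS big_ord_recl [RHS]big_ord_recl A0 !mul0r !add0r.
by apply: eq_bigr => i _; rewrite IH // subSS ltnS leq_subr.
Qed.

Lemma expSD A B : A 0%N = 0 -> B 0%N = 0 ->
  expS (fun n => A n + B n) = mulS (expS A) (expS B).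
Proof.
move=> A0 B0; have AB0 : A 0%N + B 0%N = 0 by rewrite A0 B0 addr0.
apply: (@eulerS_sol_uniq (eulerS (fun n => A n + B n))).
- by rewrite /eulerS mul0r.
- by rewrite mulS_coef0 !expS_coef0 mulr1.
- exact: eulerS_expS AB0.
rewrite eulerS_mulS !eulerS_expS // eulerSD mulSDl -!mulSA.
by rewrite (mulSA (expS A) (eulerS B)) (mulSC (expS A) (eulerS B)) -mulSA.
Qed.

End Exponential.
End SeriesRing.

Section SingularSeries.
Variables (R : comUnitRingType) (p : nat).
Implicit Types (f S T Y c : nat -> R).

Definition singular f := forall n, ~~ (p %| n)%N -> f n = 0.

Lemma singular_coef_sub S i n :
  singular S -> (i <= n)%N -> (p %| i)%N != (p %| n)%N -> S (n - i)%N = 0.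
Proof.
move=> sS le_in pi_pn; apply: sS; apply: contra pi_pn => p_ni.
by rewrite -(subnK le_in) dvdn_addr.
Qed.

Lemma singular_mulS S T : singular S -> singular T -> singular (mulS S T).
Proof.
move=> sS sT n pn; rewrite /mulS big1 // => i _.
have le_in : (i <= n)%N by rewrite -ltnS.
have [pi|pi] := boolP (p %| i)%N; last by rewrite sS ?mul0r.
by rewrite (singular_coef_sub sT le_in) ?mulr0 // pi eq_sym (negbTE pn).
Qed.

Lemma singular_powS S k : singular S -> singular (powS S k).
Proof.
move=> sS; elim: k => [|k IH]; last exact: singular_mulS.
by move=> [|n] //; rewrite dvdn0.
Qed.

Lemma singular_expS S : singular S -> singular (expS S).
Proof.
move=> sS n pn; rewrite /expS big1 // => k _.
by rewrite (singular_powS k sS) ?mulr0.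
Qed.

Lemma sing_part_mulSr f S :
  singular S -> sing_part p (mulS f S) = mulS (sing_part p f) S.
Proof.
move=> sS; apply: functional_extensionality => n; rewrite /sing_part /mulS.
case: ifPn => pn; [apply: eq_bigr | symmetry; apply: big1] => i _;
  case: ifPn => pi; rewrite ?mul0r //; have le_in : (i <= n)%N by rewrite -ltnS.
  by rewrite (singular_coef_sub sS le_in) ?mulr0 ?pn ?(negbTE pi).
by rewrite (singular_coef_sub sS le_in) ?mulr0 ?pi ?(negbTE pn).
Qed.

Lemma reg_part_mulSr f S :
  singular S -> reg_part p (mulS f S) = mulS (reg_part p f) S.
Proof.
move=> sS; apply: functional_extensionality => n; rewrite /reg_part /mulS.
case: ifPn => pn; [symmetry; apply: big1 | apply: eq_bigr] => i _;
  case: ifPn => pi; rewrite ?mul0r //; have le_in : (i <= n)%N by rewrite -ltnS.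
  by rewrite (singular_coef_sub sS le_in) ?mulr0 ?pn ?(negbTE pi).
by rewrite (singular_coef_sub sS le_in) ?mulr0 ?pi ?(negbTE pn).
Qed.

Lemma logseries_reg_sing_part c :
  logseries c = fun n => logseries (reg_part p c) n + logseries (sing_part p c) n.
Proof.
apply: functional_extensionality => n; rewrite /logseries /reg_part /sing_part.
by case: eqP => _; [rewrite addr0 | case: ifP => _; rewrite mul0r ?addr0 ?add0r].
Qed.

Lemma singular_logseries_sing_part c : singular (logseries (sing_part p c)).
Proof.
by move=> n pn; rewrite /logseries /sing_part (negbTE pn) mul0r if_same.
Qed.

Lemma regular_quotient_mulSr f S Y : S 0%N = 1 -> singular S ->
  (forall n, mulS Y (sing_part p (mulS f S)) n = reg_part p (mulS f S) n) ->
  forall n, mulS Y (sing_part p f) n = reg_part p f n.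
Proof.
move=> S0 sS quotY; suff -> : mulS Y (sing_part p f) = reg_part p f by [].
apply: (mulS_injr S0); rewrite /= -mulSA -sing_part_mulSr // -reg_part_mulSr //.
exact: functional_extensionality.
Qed.

End SingularSeries.

Section RegularPolynomials.
Variables (R : comUnitRingType) (p : nat) (c : nat -> R).

Definition regular_qpoly (r : R) :=
  exists e : ratpolyexpr, qvars_in (fun i => ~~ (p %| i)%N) e /\ r = qeval c e.

Lemma regular_qpoly_ratr q : regular_qpoly (ratr q).
Proof. by exists (QConst q). Qed.

Lemma regular_qpoly_var i : ~~ (p %| i)%N -> regular_qpoly (c i).
Proof. by exists (QVar i). Qed.

Lemma regular_qpolyD a b : regular_qpoly a -> regular_qpoly b -> regular_qpoly (a + b).
Proof. by move=> [e1 [v1 ->]] [e2 [v2 ->]]; exists (QAdd e1 e2); rewrite /= v1 v2. Qed.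

Lemma regular_qpolyM a b : regular_qpoly a -> regular_qpoly b -> regular_qpoly (a * b).
Proof. by move=> [e1 [v1 ->]] [e2 [v2 ->]]; exists (QMul e1 e2); rewrite /= v1 v2. Qed.

Lemma regular_qpoly_nat k : regular_qpoly k%:R.
Proof. by rewrite -ratr_nat; apply: regular_qpoly_ratr. Qed.

Lemma regular_qpolyN a : regular_qpoly a -> regular_qpoly (- a).
Proof.
move=> qa; rewrite -mulN1r; apply: regular_qpolyM => //.
by rewrite -[-1](ratr_int R (-1)); apply: regular_qpoly_ratr.
Qed.

Lemma regular_qpoly_invn k : (0 < k)%N -> regular_qpoly (k%:R)^-1.
Proof.
move=> k_gt0; have -> : (k%:R)^-1 = ratr ((1%:~R / (Posz k)%:~R) : rat) :> R.
  rewrite /ratr coprimeq_num ?coprime1n // coprimeq_den ?coprime1n //.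
  by case: k k_gt0 => // k _; rewrite gtr0_sg // mulr1 mul1r.
exact: regular_qpoly_ratr.
Qed.

Lemma regular_qpoly_sum M (F : 'I_M -> R) :
  (forall i, regular_qpoly (F i)) -> regular_qpoly (\sum_(i < M) F i).
Proof.
move=> qF; apply: (big_ind regular_qpoly) => //; last exact: regular_qpolyD.
exact: (regular_qpoly_nat 0).
Qed.

Lemma regular_qpoly_expS_logseries n :
  regular_qpoly (expS (logseries (reg_part p c)) n).
Proof.
have qC m : regular_qpoly (logseries (reg_part p c) m).
  rewrite /logseries /reg_part; case: ifPn => m0; first exact: (regular_qpoly_nat 0).
  apply: regular_qpolyM; last by apply: regular_qpoly_invn; rewrite lt0n.
  by case: ifPn => pm; [exact: (regular_qpoly_nat 0) | exact: regular_qpoly_var].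
have qpow k m : regular_qpoly (powS (logseries (reg_part p c)) k m).
  elim: k m => [|k IH] m; first exact: regular_qpoly_nat.
  by apply: regular_qpoly_sum => i; apply: regular_qpolyM.
apply: regular_qpoly_sum => k; apply: regular_qpolyM => //.
exact: regular_qpoly_invn (fact_gt0 _).
Qed.

End RegularPolynomials.

Section PartitionCombinations.
Variables (R : comUnitRingType) (p : nat) (X : nat -> R).

Definition p_partition_comb n (r : R) :=
  exists l : seq (int * seq nat),
    all (fun pr => is_partition n pr.2 && has (fun k => (p %| k)%N) pr.2) l
    /\ r = \sum_(pr <- l) (\prod_(i <- pr.2) X i) *~ pr.1.

Lemma p_partition_comb0 n : p_partition_comb n 0.
Proof. by exists [::]; rewrite big_nil. Qed.

Lemma p_partition_combD n a b :
  p_partition_comb n a -> p_partition_comb n b -> p_partition_comb n (a + b).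
Proof.
move=> [l1 [ok1 ->]] [l2 [ok2 ->]]; exists (l1 ++ l2).
by rewrite all_cat ok1 ok2 big_cat.
Qed.

Lemma p_partition_combN n a : p_partition_comb n a -> p_partition_comb n (- a).
Proof.
move=> [l [ok ->]]; exists [seq (- pr.1, pr.2) | pr <- l]; rewrite all_map.
by split=> //; rewrite big_map -sumrN; apply: eq_bigr => pr _; rewrite mulrNz.
Qed.

Lemma p_partition_comb_sum n M (F : 'I_M -> R) :
  (forall i, p_partition_comb n (F i)) -> p_partition_comb n (\sum_(i < M) F i).
Proof.
move=> cF; apply: (big_ind (p_partition_comb n)) => //.
  exact: p_partition_comb0.
exact: p_partition_combD.
Qed.

Lemma p_partition_comb_coef n : (0 < n)%N -> (p %| n)%N -> p_partition_comb n (X n).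
Proof.
move=> n_gt0 pn; exists [:: (1%Z, [:: n])].
by rewrite /= /is_partition /= n_gt0 pn addn0 eqxx big_seq1 big_seq1.
Qed.

Lemma p_partition_combMcoef n m a :
  (0 < m)%N -> p_partition_comb n a -> p_partition_comb (n + m) (a * X m).
Proof.
move=> m_gt0 [l [ok ->]]; exists [seq (pr.1, sort geq (m :: pr.2)) | pr <- l].
have perm_insert (s : seq nat) : perm_eq (sort geq (m :: s)) (m :: s) by rewrite perm_sort.
split; last first.
  rewrite big_map mulr_suml; apply: eq_bigr => pr _ /=.
  by rewrite mulrzAl (perm_big _ (perm_insert _)) big_cons mulrC.
rewrite all_map; apply/allP => pr /(allP ok) /andP[/and3P[pos _ /eqP sum_n] has_p] /=.
rewrite /is_partition (perm_all _ (perm_insert _)) (perm_sumn (perm_insert _)).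
rewrite (perm_has _ (perm_insert _)) /= m_gt0 pos sum_n addnC eqxx has_p orbT andbT.
by rewrite sort_sorted // => x y; apply: leq_total.
Qed.

End PartitionCombinations.

Section RegularQuotient.
Variables (R : comUnitRingType) (p : nat) (X Y : nat -> R).
Hypotheses (X0 : X 0%N = 1)
  (quotY : forall n, mulS Y (sing_part p X) n = reg_part p X n).

Lemma regular_quotient_rec n :
  Y n = reg_part p X n - \sum_(i < n) Y i * sing_part p X (n - i)%N.
Proof.
have U0 : sing_part p X 0%N = 1 by rewrite /sing_part dvdn0.
by rewrite -quotY mulS_recr // addrK.
Qed.

Lemma regular_quotient_dvd n : (p %| n)%N -> Y n = 0.
Proof.
elim/ltn_ind: n => n IH pn.
rewrite regular_quotient_rec /reg_part pn sub0r big1 ?oppr0 // => i _.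
rewrite /sing_part; case: ifPn => [p_ni|_]; last by rewrite mulr0.
by rewrite IH ?mul0r // -(dvdn_subr (ltnW (ltn_ord i)) pn).
Qed.

Lemma regular_quotient_sub_coef n : (0 < n)%N -> p_partition_comb p X n (Y n - X n).
Proof.
elim/ltn_ind: n => n IH n_gt0.
have [pn|pn] := boolP (p %| n)%N.
  by rewrite regular_quotient_dvd // sub0r; apply/p_partition_combN/p_partition_comb_coef.
rewrite regular_quotient_rec /reg_part (negbTE pn) addrAC subrr add0r.
apply/p_partition_combN/p_partition_comb_sum => -[[|i] lt_in] /=.
  by rewrite regular_quotient_dvd ?dvdn0 // mul0r; apply: p_partition_comb0.
rewrite /sing_part; case: ifPn => p_ni; last by rewrite mulr0; apply: p_partition_comb0.
have ni_gt0 : (0 < n - i.+1)%N by rewrite subn_gt0.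
rewrite -[Y i.+1](subrK (X i.+1)) mulrDl; apply: p_partition_combD.
  have := p_partition_combMcoef ni_gt0 (IH _ lt_in (ltn0Sn _)).
  by rewrite subnKC // ltnW.
have := p_partition_combMcoef (ltn0Sn i) (p_partition_comb_coef X ni_gt0 p_ni).
by rewrite subnK 1?mulrC // ltnW.
Qed.

Lemma regular_quotient_qpoly (c : nat -> R) :
  (forall n, regular_qpoly p c (X n)) -> forall n, regular_qpoly p c (Y n).
Proof.
move=> qX; elim/ltn_ind => n IH; rewrite regular_quotient_rec.
apply: regular_qpolyD.
  by rewrite /reg_part; case: ifP => _; [apply: regular_qpoly_nat 0 | apply: qX].
apply/regular_qpolyN/regular_qpoly_sum => i; apply: regular_qpolyM; first exact: IH.
by rewrite /sing_part; case: ifP => _; [apply: qX | apply: regular_qpoly_nat 0].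
Qed.

End RegularQuotient.

Theorem mainTheorem3 (p : nat) (R : comUnitRingType) (c X Y : nat -> R) :
  prime p ->
  (forall n : nat, (n.+1)%:R \is a @GRing.unit R) ->
  (forall n, X n = expS (logseries c) n) ->
  (forall n, mulS Y (sing_part p X) n = reg_part p X n) ->
  [/\ (forall n, (p %| n)%N -> Y n = 0),
      (forall n, exists e : ratpolyexpr,
          qvars_in (fun i => ~~ (p %| i)%N) e /\ Y n = qeval c e)
    & (forall n, (0 < n)%N ->
         exists l : seq (int * seq nat),
           all (fun pr => is_partition n pr.2 && has (fun k => (p %| k)%N) pr.2) l
           /\ Y n - X n = \sum_(pr <- l) (\prod_(i <- pr.2) X i) *~ pr.1)].
Proof.
move=> _ natr_unit expX quotY.
have X0 : X 0%N = 1 by rewrite expX expS_coef0.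
pose Xreg := expS (logseries (reg_part p c)).
pose Xsing := expS (logseries (sing_part p c)).
have X_split : X = mulS Xreg Xsing.
  apply: functional_extensionality => n.
  by rewrite expX (logseries_reg_sing_part p) expSD // /logseries eqxx.
split.
- exact: regular_quotient_dvd X0 quotY.
- apply: (regular_quotient_qpoly (X := Xreg)) => [|n|n].
  + exact: expS_coef0.
  + apply: (regular_quotient_mulSr (S := Xsing)); first exact: expS_coef0.
      exact/singular_expS/singular_logseries_sing_part.
    by rewrite -X_split.
  + exact: regular_qpoly_expS_logseries.
- exact: regular_quotient_sub_coef X0 quotY.
Qed.
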